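(* Fix $m\ge 2$. Assume that for all parameters $(s,c,k)$ an $m$-wise merger $\mathrm{mw\_merge}^s_{(c,k)}$ of order $(c,k)$ on $s$ inputs (over $X\cup\{\bot\}$) is given. Define recursively, for $1\le k\le n$, the generalized comparator network $\mathrm{mw\_sel}^n_k$ on input $\bar x\in X^n$ as follows. If $k=1$: output $\max^n(\bar x)$. If $k\ge 2$: choose integers $n_1\ge\dots\ge n_m\ge 0$ with $\sum_i n_i=n$ and $n_1<n$. Let $\bar x^1$ be the first $n_1$ elements of $\bar x$, $\bar x^2$ the next $n_2$ elements, and so on. For each row $1\le j\le n_1$ let $m'_j=\max\{i:n_i\ge j\}$ and let $\bar y^j=\mathrm{sort}^{m'_j}(\langle x^1_j,\dots,x^{m'_j}_j\rangle)$. For each $1\le i\le m$ let $k_i=\min(n_1,\lfloor k/i\rfloor)$, $l_i=\min(n_i,\lfloor k/i\rfloor)$ (so $k_i\ge l_i$), let $\bar t^i=\langle y^1_i,\dots,y^{n_i}_i\rangle$ and $\bar z^i=\mathrm{mw\_sel}^{n_i}_{l_i}(\bar t^i)$ (with $\bar z^i=\bar t^i$ if $l_i=0$). Let $s=\sum_i k_i$, $c=k_1$, $\overline{out}=\mathrm{suff}(l_1+1,\bar z^1)::\dots::\mathrm{suff}(l_m+1,\bar z^m)$, and $\overline{res}=\mathrm{mw\_merge}^s_{(c,k)}(\langle \mathrm{pref}(l_1,\bar z^1)::\bot^{k_1-l_1},\dots,\mathrm{pref}(l_m,\bar z^m)::\bot^{k_m-l_m}\rangle)$. Output $\mathrm{drop}(\bot,\overline{res})::\overline{out}$.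 Then for every choice of the splittings, $\mathrm{mw\_sel}^n_k$ is a $k$-selection network, i.e. for every $\bar x\in X^n$ the output $\mathrm{mw\_sel}^n_k(\bar x)$ is top $k$ sorted.
   Context: $X$ is a totally ordered set; $\bot\notin X$ is an auxiliary element with $\bot<x$ for all $x\in X$. A sequence is sorted if it is non-increasing. For $\bar x=\langle x_1,\dots,x_n\rangle$: $\bar x::\bar y$ is concatenation; $\mathrm{pref}(i,\bar x)=\langle x_1,\dots,x_i\rangle$, $\mathrm{suff}(i,\bar x)=\langle x_i,\dots,x_n\rangle$ (empty if $i>n$); $\bot^r$ is the sequence of $r$ copies of $\bot$; $\mathrm{drop}(b,\bar x)$ removes all occurrences of $b$ from $\bar x$. $\mathrm{sort}^p$ rearranges $p$ values into non-increasing order (a $p$-sorter). A (generalized) comparator network is a map on sequences obtained by composing sorters applied to chosen positions and fixed rearrangements of positions; in particular it permutes its input. $\max^n$ denotes a comparator network on $n$ inputs whose first output is the maximum of its inputs. A sequence $\bar x\in X^n$ is top $k$ sorted ($k\le n$) if $\langle x_1,\dots,x_k\rangle$ is sorted and $x_i\ge x_j$ for all $i\le k<j$. A $k$-selection network on $n$ inputs is a comparator network whose output is top $k$ sorted for every input. $m$-wise tuple: let $c,k,m\in\mathbb{N}$, $1\le k$, $k/m\le c$, $k_i=\min(c,\lfloor k/i\rfloor)$; a tuple $\langle\bar x^1,\dots,\bar x^m\rangle$ with $\bar x^i$ of length $k_i$ is $m$-wise of order $(c,k)$ if every $\bar x^i$ is sorted and $x^i_j\ge x^{i+1}_j$ for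 all $1\le i<m$, $1\le j\le|\bar x^{i+1}|$. An $m$-wise merger of order $(c,k)$ on $s$ inputs is a comparator network $f$ such that for every $m$-wise tuple $T=\langle\bar x^1,\dots,\bar x^m\rangle$ of order $(c,k)$ with $\sum_i|\bar x^i|=s$, $f(\bar x^1::\dots::\bar x^m)$ is top $k$ sorted. *)

From HB Require Import structures.
From mathcomp Require Import all_boot all_order all_fingroup.
Set Implicit Arguments. Unset Strict Implicit. Unset Printing Implicit Defensive.
Import Order.TTheory.

(* A step is either a sorter applied to the (distinct) positions [ps], writing
   the values back in non-increasing order along [ps], or a fixed
   rearrangement of positions (output wire i receives input wire p i). *)
Inductive cstep (n : nat) : Type :=
  | CSort of seq 'I_n
  | CPerm of 'S_n.

Definition net (n : nat) := seq (cstep n).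

Definition wf_step n (st : cstep n) : bool :=
  if st is CSort ps then uniq ps else true.
Definition wf_net n (N : net n) : bool := all (@wf_step n) N.

Section Run.
Variables (A : Type) (le : rel A).
Definition ge : rel A := fun a b => le b a.

Definition run_step n (st : cstep n) (t : n.-tuple A) : n.-tuple A :=
  match st with
  | CSort ps =>
      let vs := sort ge [seq tnth t j | j <- ps] in
      [tuple (if i \in ps then nth (tnth t i) vs (index i ps) else tnth t i)
            | i < n]
  | CPerm p => [tuple tnth t (p i) | i < n]
  end.

Definition run_net n (N : net n) (t : n.-tuple A) : n.-tuple A :=
  foldl (fun t st => run_step st t) t N.

Definition run_seq n (N : net n) (s : seq A) : seq A :=
  match (insub s : option (n.-tuple A)) with
  | Some t => val (run_net N t)
  | None => s
  end.

Definition top_k_sorted (k : nat) (s : seq A) : Prop :=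
  sorted ge (take k s) /\
  all (fun a => all (fun b => le b a) (drop k s)) (take k s).

Definition is_max_net n (N : net n) : Prop :=
  wf_net N /\
  forall t : n.-tuple A,
    if val (run_net N t) is y :: _ then all (fun z => le z y) t else True.
End Run.

(* ---------- X u {bot} as option X, None = bot < every element ---------- *)
Section Bot.
Context {d : Order.disp_t} {X : orderType d}.

Definition leo (a b : option X) : bool :=
  match a, b with
  | None, _ => true
  | Some _, None => false
  | Some x, Some y => (x <= y)%O
  end.

(* m-wise tuple of order (c,k) (k/m <= c read as k <= c*m) *)
Definition mwise_tuple (m c k : nat) (xs : seq (seq (option X))) : Prop :=
  [/\ 1 <= k, k <= c * m, size xs = m &
      forall i, i < m -> size (nth [::] xs i) = minn c (k %/ i.+1)] /\
  all (sorted (ge leo)) xs /\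
      forall i j, i.+1 < m -> j < size (nth [::] xs i.+1) ->
        leo (nth None (nth [::] xs i.+1) j) (nth None (nth [::] xs i) j).

Definition is_merger (m c k s : nat) (N : net s) : Prop :=
  wf_net N /\
  forall xs, mwise_tuple m c k xs -> sumn (map size xs) = s ->
    top_k_sorted leo k (run_seq leo N (flatten xs)).
End Bot.

Definition valid_split (m n : nat) (ns : seq nat) : Prop :=
  [/\ size ns = m, sorted geq ns, sumn ns = n & head 0 ns < n].

Fixpoint blocks {A : Type} (ns : seq nat) (x : seq A) : seq (seq A) :=
  if ns is n :: ns' then take n x :: blocks ns' (drop n x) else [::].

Section MwSel.
Context {d : Order.disp_t} {X : orderType d}.
Variables (m : nat)
  (merge : forall s c k : nat, net s)
  (maxnet : forall n : nat, net n)
  (split : seq nat -> nat -> nat -> seq nat).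
  (* split p n k = (n_1,...,n_m) chosen at the node with path p of the
     recursion tree (path = sequence of child indices), for parameters n,k *)

Fixpoint mw_sel_rec (fuel : nat) (path : seq nat) (n k : nat) (x : seq X)
    : seq X :=
  match fuel with
  | 0 => x
  | fuel'.+1 =>
    if k == 1 then run_seq (<=%O : rel X) (maxnet n) x else
    let ns := split path n k in
    let n1 := head 0 ns in
    let bs := blocks ns x in
    (* y^j = sort^{m'_j} <x^1_j, ..., x^{m'_j}_j>, rows j = 1..n1 *)
    let ys := [seq sort (ge (<=%O : rel X)) (pmap (fun b => onth b j) bs)
              | j <- iota 0 n1] in
    (* t^i = <y^1_i, ..., y^{n_i}_i> *)
    let ts := [seq pmap (fun y => onth y i) ys | i <- iota 0 m] in
    let ls := [seq minn (nth 0 ns i) (k %/ i.+1) | i <- iota 0 m] in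
    let ks := [seq minn n1 (k %/ i.+1) | i <- iota 0 m] in
    let zs := [seq (let li := nth 0 ls i in
                    let ti := nth [::] ts i in
                    if li == 0 then ti
                    else mw_sel_rec fuel' (rcons path i) (nth 0 ns i) li ti)
              | i <- iota 0 m] in
    let s := sumn ks in
    let c := nth 0 ks 0 in
    let out := flatten [seq drop (nth 0 ls i) (nth [::] zs i) | i <- iota 0 m] in
    let inp := flatten [seq map Some (take (nth 0 ls i) (nth [::] zs i))
                              ++ nseq (nth 0 ks i - nth 0 ls i) None
                       | i <- iota 0 m] in
    let res := run_seq leo (merge s c k) inp in
    pmap id res ++ out      (* drop(bot, res) :: out *)
  end.

(* fuel n.+1 suffices since every recursive call has n_i <= n_1 < n *)
Definition mw_sel (n k : nat) (x : seq X) : seq X :=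
  mw_sel_rec n.+1 [::] n k x.
End MwSel.

From HB Require Import structures.
From mathcomp Require Import all_boot all_order all_fingroup.
From mathcomp Require Import zify.
Set Implicit Arguments. Unset Strict Implicit. Unset Printing Implicit Defensive.
Import Order.TTheory.

(* Once every row <x^1_j, ..., x^{m'_j}_j> is sorted, each t^{i+1}
   is dominated entrywise by t^i, so for every v the number of entries >= v in t^i
   does not increase with i.  Hence the prefixes of length l_i of the recursively
   selected z^i form an m-wise tuple, and the merger returns its k largest elements
   sorted.  An element o left in the suffix of z^i is not among the k largest
   overall: at least l_i + 1 = k/(i+1) + 1 entries of t^i, hence of every t^i' with
   i' <= i, are >= o, so the prefix of z^i' puts at least min(k/(i'+1), k/(i+1)+1)
   of them into the merger's input, and these counts add up to at least k. *)

Section TopSorted.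
Variables (A : eqType) (le : rel A).

Fixpoint top_sortedb (k : nat) (s : seq A) : bool :=
  match k, s with
  | 0, _ | _, [::] => true
  | k'.+1, a :: s' => all (le^~ a) s' && top_sortedb k' s'
  end.

Hypothesis leT : transitive le.

Lemma ge_trans : transitive (ge le).
Proof. by move=> y x z xy yz; apply: leT yz xy. Qed.

Lemma top_sortedP k s : reflect (top_k_sorted le k s) (top_sortedb k s).
Proof.
elim: s k => [|a s IH] [|k] /=; try by constructor.
rewrite /top_k_sorted /= (path_sortedE ge_trans) -[in all _ s](cat_take_drop k s) all_cat.
apply: (iffP andP) => [[/andP[h1 h3] /IH[h2 h4]]|[/andP[h1 h2] /andP[h3 h4]]].
  by rewrite h1 h2 h3 h4.
by rewrite h1 h3; split=> //; apply/IH.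
Qed.

Lemma top_sortedb_sorted_take k s : top_sortedb k s -> sorted (ge le) (take k s).
Proof. by case/top_sortedP. Qed.

Lemma top_sortedb_nth_ge x0 k s j v : top_sortedb k s -> j < k ->
  j < count (le v) s -> le v (nth x0 s j).
Proof.
elim: s k j => [|a s IH] [|k] [|j] //= /andP[s_le_a top_s].
- case v_le_a: (le v a) => //= _; rewrite add0n -has_count.
  case/(has_nthP x0)=> i lt_i v_le; rewrite -v_le_a.
  exact: leT v_le (all_nthP x0 s_le_a i lt_i).
- rewrite ltnS => lt_jk lt_j; apply: IH top_s lt_jk _.
  by case: (le v a) lt_j => /=; lia.
Qed.

Lemma count_le_take_top_sortedb v k s : top_sortedb k s ->
  minn k (count (le v) s) <= count (le v) (take k s).
Proof.
elim: s k => [|a s IH] [|k] //=; first by rewrite min0n.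
case/andP=> s_le_a top_s; case v_le_a: (le v a); first by rewrite !add1n minnSS ltnS IH.
suff -> : count (le v) s = 0 by rewrite minn0.
apply/eqP; rewrite -leqn0 leqNgt -has_count; apply/hasP=> -[b b_in v_le_b].
by rewrite (leT v_le_b (allP s_le_a b b_in)) in v_le_a.
Qed.

Lemma top_sortedb_cat k R O : top_sortedb k R ->
  (forall o, o \in O -> k <= count (le o) R) -> top_sortedb k (R ++ O).
Proof.
elim: R k => [|a R IH] [|k] //=.
  by case: O => [|o O] //= _ /(_ o (mem_head _ _)).
case/andP=> R_le_a top_R cntO; rewrite all_cat R_le_a IH //=; last first.
  by move=> o /cntO; case: (le o a) => /=; lia.
rewrite andbT; apply/allP=> o /cntO; case o_le_a: (le o a) => //=.
rewrite add0n => /(leq_ltn_trans (leq0n k)); rewrite -has_count => /hasP[b b_in o_le_b].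
by rewrite -o_le_a (leT o_le_b (allP R_le_a b b_in)).
Qed.

Hypothesis leR : reflexive le.

Lemma count_top_sortedb_nth x0 k s j : top_sortedb k s -> j < k -> j < size s ->
  j < count (le (nth x0 s j)) s.
Proof.
elim: s k j => [|a s IH] [|k] [|j] //=; first by rewrite leR.
case/andP=> s_le_a top_s lt_jk lt_js.
by rewrite (all_nthP x0 s_le_a j lt_js) add1n ltnS; apply: IH top_s _ _.
Qed.

Lemma count_drop_top_sortedb k s o : top_sortedb k s -> o \in drop k s ->
  k < count (le o) s.
Proof.
elim: s k => [|a s IH] [|k] //=.
  move=> _ o_in; have: has (le o) (a :: s) by apply/hasP; exists o.
  by rewrite has_count.
case/andP=> s_le_a top_s o_in.
by rewrite (allP s_le_a o (mem_drop o_in)) add1n ltnS IH.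
Qed.
End TopSorted.

Lemma map_nth_index (T : eqType) (U : Type) (g : T -> U) (ps : seq T) (vs : seq U) :
  uniq ps -> size vs = size ps -> map (fun i => nth (g i) vs (index i ps)) ps = vs.
Proof.
case: vs => [|v0 vs] uniq_ps size_vs; first by case: ps size_vs {uniq_ps}.
apply: (@eq_from_nth _ v0); rewrite size_map // => j lt_j.
have p0 : T by case: ps lt_j {uniq_ps size_vs}.
by rewrite (nth_map p0) // index_uniq // (set_nth_default v0) // size_vs.
Qed.

Section Networks.
Variables (A : eqType) (le : rel A).

Lemma perm_run_step n (st : cstep n) (t : n.-tuple A) :
  wf_step st -> perm_eq (run_step le st t) t.
Proof.
rewrite -[X in perm_eq _ X]map_tnth_enum; case: st => [ps uniq_ps | p _] /=.
  set vs := sort _ _; set f := fun i : 'I_n => if i \in ps then _ else _.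
  have size_vs : size vs = size ps by rewrite size_sort size_map.
  have enumE : perm_eq (enum 'I_n) (ps ++ [seq i <- enum 'I_n | i \notin ps]).
    rewrite -(perm_filterC (mem ps)) perm_cat2r uniq_perm ?filter_uniq //.
      by rewrite -enumT enum_uniq.
    by move=> i; rewrite mem_filter mem_enum andbT.
  rewrite (perm_trans (perm_map f enumE)) // perm_sym (perm_trans (perm_map _ enumE)) //.
  rewrite !map_cat perm_sym; apply: perm_cat.
    suff -> : map f ps = vs by rewrite perm_sort.
    rewrite -(map_nth_index (tnth t) uniq_ps size_vs).
    by apply/eq_in_map=> i i_in; rewrite /f i_in.
  suff -> : map f [seq i <- enum 'I_n | i \notin ps] =
            map (tnth t) [seq i <- enum 'I_n | i \notin ps] by [].
  by apply/eq_in_map=> i; rewrite mem_filter /f => /andP[/negbTE ->].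
rewrite (map_comp (tnth t) p); apply/perm_map/uniq_perm; rewrite ?enum_uniq //.
  by rewrite map_inj_uniq ?enum_uniq //; apply: perm_inj.
by move=> i; rewrite mem_enum; apply/mapP; exists (p^-1 i)%g; rewrite ?mem_enum ?permKV.
Qed.

Lemma perm_run_net n (N : net n) (t : n.-tuple A) :
  wf_net N -> perm_eq (run_net le N t) t.
Proof.
rewrite /run_net; elim: N t => //= st N IH t /andP[wf_st wf_N].
exact: perm_trans (IH _ wf_N) (perm_run_step t wf_st).
Qed.

Lemma perm_run_seq n (N : net n) (s : seq A) :
  wf_net N -> perm_eq (run_seq le N s) s.
Proof. by rewrite /run_seq; case: insubP => [t _ <-|_ _]; [apply: perm_run_net|]. Qed.
End Networks.

Section Ordered.
Context {d : Order.disp_t} {X : orderType d}.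
Local Notation le := (<=%O : rel X).

Lemma max_net_top_sorted n (N : net n) (x : seq X) :
  is_max_net le N -> size x = n ->
  perm_eq (run_seq le N x) x /\ top_sortedb le 1 (run_seq le N x).
Proof.
move=> [wf_N max_N] size_x; split; first exact: perm_run_seq.
rewrite /run_seq; case: insubP => [t _ _|]; last by rewrite size_x eqxx.
move: (max_N t) (perm_run_net le t wf_N).
case: (run_net le N t) => -[|y r] _ //= y_max perm_yr; rewrite andbT.
apply/allP=> b b_in; apply: (allP y_max).
by rewrite -(perm_mem perm_yr) inE b_in orbT.
Qed.

Lemma leo_trans : transitive (@leo d X).
Proof. by move=> [y|] [x|] [z|] //=; apply: le_trans. Qed.

Lemma top_sortedb_pmap k (s : seq (option X)) :
  top_sortedb leo k s -> top_sortedb le k (pmap id s).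
Proof.
elim: s k => [|[a|] s IH] [|k] //=.
- case/andP=> s_le_a /IH ->; rewrite andbT; apply/allP=> b.
  by rewrite mem_pmap => /mapP[[c|] // c_in [->]]; apply: (allP s_le_a _ c_in).
- case/andP=> s_bot _; suff -> : pmap id s = [::] by case: k.
  by elim: s s_bot {IH} => [|[c|] s IHs] //=.
Qed.

Lemma sorted_pad (s : seq X) r : sorted (ge le) s ->
  sorted (ge leo) (map Some s ++ nseq r None).
Proof.
elim: s => [|a s IH] /=; first by elim: r => [|[|r] IHr].
move=> s_sorted; move: (IH (path_sorted s_sorted)).
case: s s_sorted {IH} => [|b s] /=; first by case: r.
by case/andP=> b_le_a _ ->; rewrite andbT.
Qed.

Lemma nth_pad (x0 : X) (s : seq X) r j :
  nth None (map Some s ++ nseq r None) j = if j < size s then Some (nth x0 s j) else None.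
Proof.
rewrite nth_cat size_map; case: ifP => lt_js; first by rewrite (nth_map x0).
by rewrite nth_nseq if_same.
Qed.

Lemma pmap_pad {I : Type} (f : I -> seq X) (r : I -> nat) (s : seq I) :
  pmap id (flatten [seq map Some (f i) ++ nseq (r i) None | i <- s]) = flatten (map f s).
Proof.
elim: s => //= i s IH; rewrite !pmap_cat IH (map_pK (f := id) (fun=> erefl)).
by elim: (r i) {IH} => [|j] /=; rewrite ?cats0.
Qed.
End Ordered.

Lemma ltn_count_sorted (T : Type) (r : rel T) (p : pred T) (x0 : T) s j :
  (forall a b, r a b -> p b -> p a) -> transitive r -> sorted r s ->
  (j < count p s) = (j < size s) && p (nth x0 s j).
Proof.
move=> p_closed r_trans; elim: s j => [|a s IH] j //=.
rewrite (path_sortedE r_trans) => /andP[a_r_s sorted_s].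
case p_a: (p a); first by case: j => [|j] //=; rewrite add1n ltnS IH.
have -> : count p s = 0.
  apply/eqP; rewrite -leqn0 leqNgt -has_count -all_predC; apply: sub_all a_r_s.
  by move=> b r_ab /=; apply/negP=> /(p_closed _ _ r_ab); rewrite p_a.
case: j => [|j] /=; first by rewrite p_a.
rewrite addn0 ltnS; apply/esym/negP=> /andP[lt_js].
by move/(p_closed _ _ (all_nthP x0 a_r_s j lt_js)); rewrite p_a.
Qed.

Lemma geq_trans : transitive geq.
Proof. by move=> b a c ba cb; apply: leq_trans cb ba. Qed.

Lemma nth_geq_sorted (ns : seq nat) i j : sorted geq ns -> i <= j ->
  nth 0 ns j <= nth 0 ns i.
Proof.
move=> sorted_ns le_ij; case: (ltnP j (size ns)) => [lt_j|]; last by move/(nth_default 0)->.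
exact: (sorted_leq_nth geq_trans leqnn 0 sorted_ns) (leq_ltn_trans le_ij lt_j) lt_j le_ij.
Qed.

Lemma ltn_count_geq_sorted (ns : seq nat) i j : sorted geq ns ->
  (i < count (ltn j) ns) = (j < nth 0 ns i).
Proof.
move=> sorted_ns; rewrite (ltn_count_sorted 0 _ _ geq_trans sorted_ns); last first.
  by move=> a b le_ba /leq_trans; apply.
by case: ltnP => // le_ns_i; rewrite nth_default.
Qed.

Lemma count_ltn_iota a N : count (fun j => j < a) (iota 0 N) = minn a N.
Proof.
elim: N => [|N IH]; first by rewrite minn0.
by rewrite -addn1 iotaD count_cat IH /= add0n addn0; case: ltnP; lia.
Qed.

Lemma sumn_le_size_head (ns : seq nat) : sorted geq ns -> sumn ns <= size ns * head 0 ns.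
Proof.
case: ns => [|a ns] //=; rewrite (path_sortedE geq_trans) => /andP[ns_le_a _].
by elim: ns ns_le_a => [|b ns IH] /=; [lia|case/andP=> le_ba /IH; rewrite mulSn; lia].
Qed.

Lemma leq_sumn_map (I : eqType) (f g : I -> nat) (s : seq I) :
  {in s, forall i, f i <= g i} -> sumn (map f s) <= sumn (map g s).
Proof.
elim: s => //= a s IH fg; rewrite leq_add ?fg ?mem_head ?IH //.
by move=> i i_in; apply: fg; rewrite inE i_in orbT.
Qed.

Lemma leq_sumn_min_div k I : 0 < I ->
  k <= sumn [seq minn (k %/ i.+1) (k %/ I).+1 | i <- iota 0 I].
Proof.
(* With J = k/I + 1 and a = k/J < I, the first a terms equal J and the next one
   is at least k mod J. *)
move=> I_gt0; set J := (k %/ I).+1; set a := k %/ J.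
have lt_aI : a < I by rewrite ltn_divLR // mulnC ltn_ceil.
have le_Jdiv i : i < a -> J <= k %/ i.+1.
  by move=> lt_ia; rewrite leq_divRL // mulnC (leq_trans _ (leq_divM k J)) ?leq_mul2r ?lt_ia ?orbT.
have kE : k = a * J + k %% J by apply: divn_eq.
have lt_rJ : k %% J < J by rewrite ltn_mod.
have le_rdiv : k %% J <= k %/ a.+1 by rewrite leq_divRL //; nia.
rewrite -(subnKC (ltnW lt_aI)) iotaD map_cat sumn_cat.
rewrite (@eq_in_map _ _ (fun i => minn (k %/ i.+1) J) (fun=> J) (iota 0 a)).1; last first.
  by move=> i; rewrite mem_iota add0n => /le_Jdiv/minn_idPr.
have [r ->] : exists r, I - a = r.+1 by exists (I - a).-1; lia.
have -> : sumn [seq J | _ <- iota 0 a] = a * J.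
  by rewrite -[in RHS](size_iota 0 a); elim: (iota 0 a) => //= _ s ->; rewrite mulSn.
rewrite /= add0n {1}kE leq_add2l.
by rewrite (leq_trans _ (leq_addr _ _)) // leq_min le_rdiv ltnW.
Qed.

Lemma map_size_blocks {T : Type} ns (x : seq T) : sumn ns <= size x ->
  map size (blocks ns x) = ns.
Proof.
elim: ns x => //= a ns IH x le_sum.
by rewrite size_takel ?IH ?size_drop //; lia.
Qed.

Lemma flatten_blocks {T : Type} ns (x : seq T) : sumn ns = size x ->
  flatten (blocks ns x) = x.
Proof.
elim: ns x => [|a ns IH] x /=; first by case: x.
by move=> sum_ns; rewrite IH ?cat_take_drop // size_drop -sum_ns addKn.
Qed.

Section Columns.
Variable T : Type.
Implicit Types (L : seq (seq T)) (l : seq T).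

Definition col L j : seq T := pmap (fun b => onth b j) L.

Lemma col_cons l L j :
  col (l :: L) j = (if onth l j is Some a then [:: a] else [::]) ++ col L j.
Proof. by rewrite /col /=; case: (onth l j). Qed.

Lemma size_col L j : size (col L j) = count (fun b => j < size b) L.
Proof. by rewrite size_pmap; apply: eq_count => b; rewrite onthTE. Qed.

Lemma col_nil L j : all (fun b => size b <= j) L -> col L j = [::].
Proof. by elim: L => // l L IH /andP[l_le /IH]; rewrite col_cons onth_default. Qed.

Definition size_ge : rel (seq T) := fun a b => size b <= size a.

Lemma size_ge_trans : transitive size_ge.
Proof. by move=> b a c; rewrite /size_ge => ba cb; apply: leq_trans cb ba. Qed.

Lemma nth_col (x0 : T) L i j : sorted size_ge L ->
  nth x0 (col L i) j = nth x0 (nth [::] L j) i.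
Proof.
elim: L j => [|l L IH] j; first by rewrite !nth_nil.
rewrite col_cons -[sorted _ _]/(path _ l L) (path_sortedE size_ge_trans).
case/andP=> L_le_l sorted_L; case: (ltnP i (size l)) => [lt_il|le_li].
  by rewrite onthE (nth_map x0) //; case: j => //= j; apply: IH.
have L_le_i : all (fun b => size b <= i) L.
  by apply: sub_all L_le_l => b /leq_trans; apply.
rewrite onth_default // col_nil //; case: j => [|j] /=; first by rewrite !nth_default.
case: (ltnP j (size L)) => [lt_jL|le_Lj]; last by rewrite (nth_default _ le_Lj) nth_nil.
by rewrite (nth_default _ (all_nthP [::] L_le_i j lt_jL)).
Qed.

Lemma flatten_onth l N : size l <= N ->
  flatten [seq (if onth l j is Some a then [:: a] else [::]) | j <- iota 0 N] = l.
Proof.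
elim: l N => [|a l IH] N le_lN.
  by elim: (iota 0 N) => //= j s ->; rewrite onth0n.
case: N le_lN => [|N] //= le_lN.
by rewrite -[1]/(1 + 0) iotaDl -map_comp IH.
Qed.
End Columns.

Lemma perm_flatten_map (T I : eqType) (f g : I -> seq T) (s : seq I) :
  {in s, forall i, perm_eq (f i) (g i)} ->
  perm_eq (flatten (map f s)) (flatten (map g s)).
Proof.
elim: s => //= a s IH fg; rewrite perm_cat ?fg ?mem_head ?IH //.
by move=> i i_in; apply: fg; rewrite inE i_in orbT.
Qed.

Lemma perm_flatten_cat (T : eqType) (I : Type) (f g : I -> seq T) (s : seq I) :
  perm_eq (flatten (map f s) ++ flatten (map g s)) (flatten [seq f i ++ g i | i <- s]).
Proof.
elim: s => //= a s IH.
by rewrite -!catA perm_cat2l perm_catCA perm_cat2l.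
Qed.

Lemma perm_flatten_col (T : eqType) (L : seq (seq T)) N :
  all (fun b => size b <= N) L ->
  perm_eq (flatten [seq col L j | j <- iota 0 N]) (flatten L).
Proof.
elim: L => [|l L IH] /=; first by elim: (iota 0 N).
case/andP=> le_lN /IH perm_L.
rewrite (eq_map (col_cons l L)) perm_sym (perm_trans _ (perm_flatten_cat _ _ _)) //.
by rewrite flatten_onth // perm_cat2l perm_sym.
Qed.

Section RowsColumns.
Context {d : Order.disp_t} {X : orderType d}.
Local Notation le := (<=%O : rel X).

Definition rows (ns : seq nat) (x : seq X) : seq (seq X) :=
  [seq sort (ge le) (col (blocks ns x) j) | j <- iota 0 (head 0 ns)].

Definition columns (m : nat) (ns : seq nat) (x : seq X) : seq (seq X) :=
  [seq col (rows ns x) i | i <- iota 0 m].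

Variables (m : nat) (ns : seq nat) (x : seq X).
Hypotheses (size_ns : size ns = m) (sorted_ns : sorted geq ns) (sum_ns : sumn ns = size x).
Local Notation n1 := (head 0 ns).
Local Notation ys := (rows ns x).
Local Notation t i := (nth [::] (columns m ns x) i).

Lemma nth_le_head i : nth 0 ns i <= n1.
Proof. by rewrite -nth0 nth_geq_sorted. Qed.

Lemma size_col_blocks j : size (col (blocks ns x) j) = count (ltn j) ns.
Proof. by rewrite size_col -{2}(map_size_blocks (eq_leq sum_ns)) count_map. Qed.

Lemma sorted_size_rows : sorted (size_ge (T := X)) ys.
Proof.
apply: homo_sorted (iota_sorted 0 n1) => j j' le_jj'.
rewrite /size_ge !size_sort !size_col_blocks; apply: sub_count => a /=.
exact: leq_ltn_trans.
Qed.

Lemma sorted_rows j : j < n1 -> sorted (ge le) (nth [::] ys j).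
Proof.
move=> lt_j; rewrite (nth_map 0) ?size_iota //.
by apply: sort_sorted => a b; apply: le_total.
Qed.

Lemma size_columns i : i < m -> size (t i) = nth 0 ns i.
Proof.
move=> lt_im; rewrite (nth_map 0) ?size_iota // nth_iota // add0n size_col count_map.
rewrite (@eq_in_count _ _ (fun j => j < nth 0 ns i)) ?count_ltn_iota.
  exact/minn_idPl/nth_le_head.
move=> j; rewrite mem_iota add0n => /andP[_ lt_j] /=.
by rewrite size_sort size_col_blocks ltn_count_geq_sorted.
Qed.

Lemma columns_dominated (x0 : X) i j : i.+1 < m -> j < size (t i.+1) ->
  (nth x0 (t i.+1) j <= nth x0 (t i) j)%O.
Proof.
move=> lt_im; rewrite !(nth_map 0) ?size_iota ?(ltnW lt_im) // !nth_iota ?(ltnW lt_im) //.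
rewrite !nth_col ?sorted_size_rows // size_col.
rewrite (ltn_count_sorted [::] _ _ (@size_ge_trans X) sorted_size_rows); last first.
  by move=> a b le_ba /leq_trans; apply.
case/andP; rewrite size_map size_iota => lt_j lt_i; have := sorted_rows lt_j.
by move/(sortedP x0)/(_ i lt_i).
Qed.

Lemma perm_flatten_columns : perm_eq (flatten (columns m ns x)) x.
Proof.
have size_bs : map size (blocks ns x) = ns by apply/map_size_blocks/eq_leq.
apply: perm_trans (perm_flatten_col _) _.
  apply/allP=> y /mapP[j _ ->]; rewrite size_sort size_col_blocks -size_ns.
  exact: count_size.
apply: perm_trans (_ : perm_eq _ (flatten [seq col (blocks ns x) j | j <- iota 0 n1])) _.
  by apply: perm_flatten_map => j _; rewrite perm_sort.
rewrite -{2}(flatten_blocks sum_ns); apply: perm_flatten_col; apply/allP=> b b_in.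
have /nthP-/(_ 0)[i _ <-] : size b \in ns by rewrite -size_bs map_f.
exact: nth_le_head.
Qed.
End RowsColumns.

Lemma count_le_pointwise (T : Type) (le : rel T) (x0 v : T) (a b : seq T) :
  transitive le -> size b <= size a ->
  (forall j, j < size b -> le (nth x0 b j) (nth x0 a j)) ->
  count (le v) b <= count (le v) a.
Proof.
move=> leT; elim: b a => [|y b IH] [|z a] //= size_ba le_ba.
apply: leq_add; last by apply: IH => // j; apply: (le_ba j.+1).
by case v_le_y: (le v y); rewrite // (leT _ _ _ v_le_y (le_ba 0 isT)).
Qed.

(* l_i and k_i of the construction, for the splitting ns = (n_1, ..., n_m). *)
Definition sel_size (ns : seq nat) (k i : nat) : nat := minn (nth 0 ns i) (k %/ i.+1).
Definition pad_size (n1 k i : nat) : nat := minn n1 (k %/ i.+1).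

Lemma sel_size_noninc ns k i : sorted geq ns -> sel_size ns k i.+1 <= sel_size ns k i.
Proof.
move=> sorted_ns; have := nth_geq_sorted sorted_ns (leqnSn i).
have := @leq_div2l k i.+1 i.+2 isT (leqnSn _); rewrite /sel_size; lia.
Qed.

Section MergeStep.
Context {d : Order.disp_t} {X : orderType d}.
Local Notation le := (<=%O : rel X).

Variables (m k : nat) (ns : seq nat) (t z : nat -> seq X).
Local Notation l := (sel_size ns k).
Hypotheses (sorted_ns : sorted geq ns)
  (size_t : forall i, i < m -> size (t i) = nth 0 ns i)
  (t_dominated : forall x0 i j, i.+1 < m -> j < size (t i.+1) ->
     (nth x0 (t i.+1) j <= nth x0 (t i) j)%O)
  (perm_z : forall i, i < m -> perm_eq (z i) (t i))
  (top_z : forall i, i < m -> top_sortedb le (l i) (z i)).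

Lemma size_selected i : i < m -> size (z i) = nth 0 ns i.
Proof. by move=> lt_im; rewrite (perm_size (perm_z lt_im)) size_t. Qed.

Lemma count_selected v i : i < m -> count (le v) (z i) = count (le v) (t i).
Proof. by move=> lt_im; move/seq.permP: (perm_z lt_im). Qed.

Lemma count_columns_noninc v i i' : i < m -> i' <= i -> count (le v) (t i) <= count (le v) (t i').
Proof.
elim: i => [|i IH] lt_im; first by rewrite leqn0 => /eqP->.
rewrite leq_eqVlt => /predU1P[-> //|lt_i'i].
apply: leq_trans (IH (ltnW lt_im) lt_i'i).
apply: (@count_le_pointwise _ le v v (t i) (t i.+1) le_trans).
  by rewrite !size_t ?nth_geq_sorted // ltnW.
by move=> j; apply: t_dominated.
Qed.

Lemma count_prefixes_ge o i : i < m -> o \in drop (l i) (z i) ->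
  k <= sumn [seq count (le o) (take (l i') (z i')) | i' <- iota 0 m].
Proof.
move=> lt_im o_in; set c := count (le o).
have lt_lc : l i < c (z i) := count_drop_top_sortedb lexx (top_z lt_im) o_in.
have lt_l_nn : l i < nth 0 ns i.
  have : 0 < size (drop (l i) (z i)) by rewrite -has_predT; apply/hasP; exists o.
  by rewrite size_drop subn_gt0 size_selected.
have l_i : l i = k %/ i.+1 by move: lt_l_nn; rewrite /sel_size; lia.
apply: leq_trans (leq_sumn_min_div k (ltn0Sn i)) _.
rewrite -(subnKC lt_im) iotaD map_cat sumn_cat (leq_trans _ (leq_addr _ _)) //.
apply: leq_sumn_map => i'; rewrite mem_iota add0n => /andP[_ lt_i'i].
have lt_i'm : i' < m := leq_trans lt_i'i lt_im.
apply: leq_trans (count_le_take_top_sortedb le_trans o (top_z lt_i'm)).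
have le_ci'_nn : c (z i') <= nth 0 ns i' by rewrite -(size_selected lt_i'm) count_size.
have := count_columns_noninc o lt_im lt_i'i; rewrite -!count_selected // -/c.
by move: lt_lc le_ci'_nn; rewrite l_i /sel_size; lia.
Qed.

Lemma top_sortedb_merge_output res (r : nat -> nat) :
  perm_eq res (flatten [seq map Some (take (l i) (z i)) ++ nseq (r i) None | i <- iota 0 m]) ->
  top_sortedb leo k res ->
  top_sortedb le k (pmap id res ++ flatten [seq drop (l i) (z i) | i <- iota 0 m]).
Proof.
move=> perm_res /top_sortedb_pmap top_res; apply: (top_sortedb_cat le_trans top_res).
move=> o /flatten_mapP[i]; rewrite mem_iota add0n => /andP[_ lt_im] o_in.
move/seq.permP: (perm_pmap id perm_res) => ->; rewrite pmap_pad count_flatten -map_comp.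
exact: count_prefixes_ge lt_im o_in.
Qed.

Lemma prefixes_dominated x0 i j : i.+1 < m -> j < l i.+1 ->
  (nth x0 (z i.+1) j <= nth x0 (z i) j)%O.
Proof.
move=> lt_im lt_jl; set a := nth x0 (z i.+1) j.
have lt_j_size : j < size (z i.+1) by rewrite size_selected // (leq_trans lt_jl (geq_minl _ _)).
have := count_top_sortedb_nth lexx x0 (top_z lt_im) lt_jl lt_j_size.
rewrite -/a count_selected // => /leq_trans/(_ (count_columns_noninc a lt_im (leqnSn i))).
rewrite -count_selected ?(ltnW lt_im) //.
apply: (top_sortedb_nth_ge le_trans x0 (top_z (ltnW lt_im))).
exact: leq_trans lt_jl (sel_size_noninc k i sorted_ns).
Qed.

Lemma mwise_padded_prefixes (x0 : X) c (kk : nat -> nat) : 1 <= k -> k <= c * m ->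
  (forall i, i < m -> kk i = minn c (k %/ i.+1)) -> (forall i, i < m -> l i <= kk i) ->
  mwise_tuple m c k [seq map Some (take (l i) (z i)) ++ nseq (kk i - l i) None | i <- iota 0 m].
Proof.
move=> k_gt0 le_k_cm kkE le_l_kk.
have size_take i : i < m -> size (take (l i) (z i)) = l i.
  by move=> lt_im; rewrite size_takel // size_selected // geq_minl.
split; [split=> //|split].
- by rewrite size_map size_iota.
- move=> i lt_im; rewrite (nth_map 0) ?size_iota // nth_iota // add0n size_cat size_map.
  by rewrite size_nseq size_take // subnKC ?le_l_kk ?kkE.
- apply/allP=> s /mapP[i]; rewrite mem_iota add0n => /andP[_ lt_im] ->.
  exact/sorted_pad/(top_sortedb_sorted_take le_trans)/top_z.
move=> i j lt_im _; rewrite !(nth_map 0) ?size_iota ?(ltnW lt_im) // !nth_iota ?(ltnW lt_im) //.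
rewrite !add0n !(nth_pad x0) !size_take ?(ltnW lt_im) //; case: ifP => //= lt_jl.
have lt_jl' := leq_trans lt_jl (sel_size_noninc k i sorted_ns).
by rewrite lt_jl' /= !nth_take //; apply: prefixes_dominated.
Qed.
End MergeStep.

Section MwSelCorrect.
Context {d : Order.disp_t} {X : orderType d}.
Local Notation le := (<=%O : rel X).
Variables (m : nat) (merge : forall s c k : nat, net s) (maxnet : forall n : nat, net n)
  (split : seq nat -> nat -> nat -> seq nat).
Hypotheses (m_ge2 : 2 <= m)
  (merge_ok : forall s c k : nat, is_merger (X := X) m c k (merge s c k))
  (maxnet_ok : forall n : nat, is_max_net le (maxnet n))
  (split_ok : forall (p : seq nat) (n k : nat), 2 <= k <= n -> valid_split m n (split p n k)).

Local Notation mw_sel_rec := (mw_sel_rec m merge maxnet split).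

Definition mw_combine (k : nat) (ns : seq nat) (zs : seq (seq X)) : seq X :=
  let l := sel_size ns k in
  let kk := pad_size (head 0 ns) k in
  let inp := flatten [seq map Some (take (l i) (nth [::] zs i)) ++ nseq (kk i - l i) None
                     | i <- iota 0 m] in
  pmap id (run_seq leo (merge (sumn (map kk (iota 0 m))) (kk 0) k) inp)
    ++ flatten [seq drop (l i) (nth [::] zs i) | i <- iota 0 m].

Definition mw_children fuel path (ns : seq nat) k (x : seq X) : seq (seq X) :=
  [seq let t := nth [::] (columns m ns x) i in
       if sel_size ns k i == 0 then t
       else mw_sel_rec fuel (rcons path i) (nth 0 ns i) (sel_size ns k i) t
  | i <- iota 0 m].

Lemma mw_sel_rec_step fuel path n k x :
  mw_sel_rec fuel.+1 path n k x =
  if k == 1 then run_seq le (maxnet n) x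
  else mw_combine k (split path n k) (mw_children fuel path (split path n k) k x).
Proof.
have m_gt0 : 0 < m by apply: leq_trans m_ge2.
rewrite /=; case: eqP => // _; rewrite /mw_combine /mw_children (nth_mkseq 0 _ m_gt0).
congr (pmap id (run_seq _ _ (flatten _)) ++ flatten _); apply/eq_in_map=> i;
  by rewrite mem_iota => /andP[_ lt_im]; rewrite !nth_mkseq.
Qed.

Lemma perm_mw_combine k ns zs : size zs = m -> perm_eq (mw_combine k ns zs) (flatten zs).
Proof.
move=> size_zs; rewrite /mw_combine; set l := sel_size ns k.
have [wf_merge _] := merge_ok (sumn (map (pad_size (head 0 ns) k) (iota 0 m)))
                              (pad_size (head 0 ns) k 0) k.
rewrite (perm_trans (perm_cat (perm_pmap id (perm_run_seq leo _ wf_merge)) (perm_refl _))) //.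
rewrite pmap_pad (perm_trans (perm_flatten_cat _ _ _)) //.
by rewrite (eq_map (fun i => cat_take_drop (l i) _)) -size_zs -/(mkseq _ _) mkseq_nth.
Qed.

Lemma top_sortedb_mw_combine k n ns (x : seq X) zs :
  1 <= k <= n -> valid_split m n ns -> size x = n ->
  (forall i, i < m -> perm_eq (nth [::] zs i) (nth [::] (columns m ns x) i) /\
                      top_sortedb le (sel_size ns k i) (nth [::] zs i)) ->
  top_sortedb le k (mw_combine k ns zs).
Proof.
move=> /andP[k_gt0 le_kn] [size_ns sorted_ns sum_ns _] size_x children.
have x0 : X by move: size_x; case: x {children} => [|y _] //= n0; exfalso; lia.
rewrite -size_x in sum_ns; rewrite /mw_combine.
set n1 := head 0 ns; set l := sel_size ns k; set kk := pad_size n1 k.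
have size_t := size_columns (m := m) sorted_ns sum_ns.
have t_dom := columns_dominated (m := m) sum_ns.
have perm_z i : i < m -> _ := fun lt_im => (children i lt_im).1.
have top_z i : i < m -> _ := fun lt_im => (children i lt_im).2.
have [wf_merge merge_top] := merge_ok (sumn (map kk (iota 0 m))) (kk 0) k.
apply: (top_sortedb_merge_output sorted_ns size_t t_dom perm_z top_z (perm_run_seq leo _ wf_merge)).
have l_le_kk i : l i <= kk i.
  by rewrite leq_min geq_minr andbT (leq_trans (geq_minl _ _) (nth_le_head sorted_ns i)).
apply/(top_sortedP leo_trans)/merge_top.
  apply: (mwise_padded_prefixes sorted_ns size_t t_dom perm_z top_z x0) => // [|i _].
    have := sumn_le_size_head sorted_ns.
    by rewrite sum_ns size_x size_ns -/n1 /kk /pad_size divn1; nia.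
  by rewrite /kk /pad_size divn1 -minnA (minn_idPr (leq_div _ _)).
rewrite -map_comp; apply/congr1/eq_in_map=> i; rewrite mem_iota add0n => /andP[_ lt_im] /=.
rewrite size_cat size_map size_nseq size_takel ?subnKC //.
by rewrite (perm_size (perm_z i lt_im)) size_t // geq_minl.
Qed.

Lemma mw_sel_rec_correct fuel path n k x : n < fuel -> 1 <= k <= n -> size x = n ->
  perm_eq (mw_sel_rec fuel path n k x) x /\ top_sortedb le k (mw_sel_rec fuel path n k x).
Proof.
elim: fuel path n k x => // fuel IH path n k x lt_n_fuel k_range size_x.
rewrite mw_sel_rec_step; case: eqP => [->|/eqP k_neq1]; first exact: max_net_top_sorted.
have k_ge2 : 2 <= k <= n by case: k k_neq1 k_range => [|[|k]].
have split_valid := split_ok path k_ge2.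
have [size_ns sorted_ns sum_ns head_lt] := split_valid.
set ns := split path n k in split_valid size_ns sorted_ns sum_ns head_lt *.
rewrite -size_x in sum_ns; set zs := mw_children fuel path ns k x.
have size_zs : size zs = m by rewrite size_map size_iota.
have children i : i < m -> perm_eq (nth [::] zs i) (nth [::] (columns m ns x) i) /\
                          top_sortedb le (sel_size ns k i) (nth [::] zs i).
  move=> lt_im; rewrite /zs /mw_children nth_mkseq //=.
  case: eqP => [->|/eqP l_neq0]; first by [].
  apply: IH; rewrite ?size_columns //; last by rewrite lt0n l_neq0 geq_minl.
  exact: leq_ltn_trans (nth_le_head sorted_ns i) (leq_trans head_lt lt_n_fuel).
split; last exact: top_sortedb_mw_combine k_range split_valid size_x children.
apply: perm_trans (perm_mw_combine _ _ size_zs) _.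
apply: perm_trans (perm_flatten_columns size_ns sorted_ns sum_ns).
rewrite -(mkseq_nth [::] zs) -(mkseq_nth [::] (columns m ns x)) size_zs size_map size_iota.
by apply: perm_flatten_map => i; rewrite mem_iota => /andP[_ /children[]].
Qed.
End MwSelCorrect.

Theorem mainTheorem3 (d : Order.disp_t) (X : orderType d) (m : nat)
  (hm : 2 <= m)
  (merge : forall s c k : nat, net s)
  (hmerge : forall s c k : nat, is_merger (X := X) m c k (merge s c k))
  (maxnet : forall n : nat, net n)
  (hmax : forall n : nat, is_max_net (<=%O : rel X) (maxnet n))
  (split : seq nat -> nat -> nat -> seq nat)
  (hsplit : forall (p : seq nat) (n k : nat), 2 <= k <= n ->
              valid_split m n (split p n k))
  (n k : nat) (x : seq X) :
  1 <= k <= n -> size x = n ->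
  top_k_sorted (<=%O : rel X) k (mw_sel m merge maxnet split n k x).
Proof.
move=> k_range size_x; apply/(top_sortedP le_trans).
exact: (mw_sel_rec_correct hm hmerge hmax hsplit [::] (ltnSn n) k_range size_x).2.
Qed.
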